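(* For every complex number $x$ there exists a unital $\mathbb{C}$-algebra automorphism $\tau_x$ of $\tilde{\mathcal{A}}_{conv.}$ which commutes with the left and right actions of $B$ on $\tilde{\mathcal{A}}_{conv.}$ (i.e. $\tau_x(SXT)=S\tau_x(X)T$ for $S,T\in B$, $X\in\tilde{\mathcal{A}}_{conv.}$) and satisfies $$\tau_x(a)=a+xb,\qquad \tau_x(b)=b,\qquad \tau_x(1)=1.$$
   Context: $\widehat{\mathcal{A}}$ is the algebra of formal power series $\sum_{p,q\ge0}\gamma_{p,q}a^pb^q$ in variables $a,b$ with $ab-ba=b^2$ (the $(a,b)$-adic completion of the polynomial algebra with this relation). $\tilde{\mathcal{A}}_{conv.}\subset\widehat{\mathcal{A}}$ is the subalgebra of series with $|\gamma_{p,q}|\le C_RR^{p+q}q!$ for some $R>1$, $C_R>0$. $B=\mathbb{C}\{\{b\}\}\subset\tilde{\mathcal{A}}_{conv.}$ is the subalgebra of series $\sum c_qb^q$ with $|c_q|\le CR^qq!$ for some $C,R$. *)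

From mathcomp Require Import all_boot all_algebra.
From mathcomp Require Import reals Rstruct complex.
Import GRing.Theory Num.Theory.
Set Implicit Arguments.
Unset Strict Implicit.
Unset Printing Implicit Defensive.
Local Open Scope ring_scope.
Local Open Scope complex_scope.

Definition RR := Rdefinitions.R.
Definition CC := (RR)[i].

(* An element of \hat A = sum_{p,q} gamma_{p,q} a^p b^q (normally ordered:
   powers of a to the left of powers of b) is its coefficient array. *)
Definition series := nat -> nat -> CC.

Definition sadd (X Y : series) : series := fun p q => X p q + Y p q.
Definition sscale (c : CC) (X : series) : series := fun p q => c * X p q.

Definition sone : series := fun p q => if (p == 0%N) && (q == 0%N) then 1 else 0.
Definition sa : series := fun p q => if (p == 1%N) && (q == 0%N) then 1 else 0.
Definition sb : series := fun p q => if (p == 0%N) && (q == 1%N) then 1 else 0.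

Definition rising (q k : nat) : nat := \prod_(i < k) (q + i)%N.

(* From ab - ba = b^2 one gets [a, b^q] = q b^(q+1), and then
   b^q a^r = sum_k (-1)^k 'C(r,k) q(q+1)...(q+k-1) a^(r-k) b^(q+k). *)
Definition reorder_coef (q r k : nat) : CC :=
  (-1) ^+ k * ('C(r, k) * rising q k)%:R.

(* Product in \hat A:
   (a^p b^q)(a^r b^s) = sum_k reorder_coef q r k a^(p+r-k) b^(q+k+s). *)
Definition smul (X Y : series) : series := fun m n =>
  \sum_(k < n.+1) \sum_(p < m.+1) \sum_(q < (n - k).+1)
     X p q * Y (m - p + k)%N (n - k - q)%N * reorder_coef q (m - p + k) k.

Definition conv (X : series) : Prop :=
  exists (R C : RR), 1 < R /\ 0 < C /\
    forall p q : nat, `|X p q| <= (C * R ^+ (p + q) * (q`!)%:R)%:C.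

Definition inB (X : series) : Prop :=
  (forall p q : nat, (0 < p)%N -> X p q = 0) /\
  exists (R C : RR), forall q : nat, `|X 0%N q| <= (C * R ^+ q * (q`!)%:R)%:C.

(* The algebra acts faithfully on t^y C[[t]] (y in C) with a acting as t^2 d/dt and b as
   multiplication by t, since [t^2 d/dt, t] = t^2; then a^p b^q t^y = (y+q)_p t^(y+p+q),
   with (z)_p the rising factorial.  The coefficients [repr_coef X y N] of X t^y determine X
   and turn products into convolutions.  Conjugation by t^x sends t^2 d/dt to
   t^2 d/dt + x t, and accordingly [repr_coef (tau x X) y = repr_coef X (y + x)]: so tau x
   is multiplicative, tau (-x) inverts it, and it fixes every power series in b alone.
   It preserves the growth condition because the coefficient of a^m b^k in (a + x b)^(m+k)
   has modulus at most 2^(m+k) (1+|x|)^k k!. *)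

From mathcomp Require Import all_boot all_algebra.
From mathcomp Require Import reals Rstruct complex.
From mathcomp Require Import ring zify lra.
From Stdlib Require Import FunctionalExtensionality.
Import order.Order.TTheory GRing.Theory Num.Theory.
Set Implicit Arguments.
Unset Strict Implicit.
Unset Printing Implicit Defensive.
Local Open Scope ring_scope.
Local Open Scope complex_scope.

Section TriangularSums.
Variable V : nmodType.
Implicit Type f : nat -> nat -> V.

Lemma sum_triangle_mkcond M f :
  \sum_(i < M.+1) \sum_(j < (M - i).+1) f i j =
  \sum_(i < M.+1) \sum_(j < M.+1) (if (i + j <= M)%N then f i j else 0).
Proof.
apply: eq_bigr => i _.
rewrite (big_ord_widen M.+1 (f i)) ?ltnS ?leq_subr // big_mkcond.
by apply: eq_bigr => j _; rewrite ltnS leq_subRL // -ltnS.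
Qed.

Lemma sum_triangle_exchange M f :
  \sum_(i < M.+1) \sum_(j < (M - i).+1) f i j =
  \sum_(j < M.+1) \sum_(i < (M - j).+1) f i j.
Proof.
rewrite sum_triangle_mkcond (sum_triangle_mkcond M (fun j i => f i j)).
by rewrite exchange_big; apply: eq_bigr => j _; apply: eq_bigr => i _; rewrite addnC.
Qed.

Lemma sum_triangle_antidiag M f :
  \sum_(j < M.+1) \sum_(k < (M - j).+1) f j k =
  \sum_(r < M.+1) \sum_(k < r.+1) f (r - k)%N k.
Proof.
rewrite sum_triangle_exchange.
transitivity (\sum_(r < M.+1) \sum_(k < M.+1)
                (if (k <= r)%N then f (r - k)%N k else 0)); last first.
  apply: eq_bigr => r _.
  rewrite (big_ord_widen M.+1 (fun k => f (r - k)%N k)) // [RHS]big_mkcond.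
  by apply: eq_bigr => k _; rewrite ltnS.
rewrite [RHS]exchange_big; apply: eq_bigr => k _.
rewrite -(big_mkord xpredT (fun r => if (k <= r)%N then f (r - k)%N k else 0)).
rewrite -(big_mkord xpredT (f^~ k)).
rewrite [RHS](big_cat_nat (leq0n k) (ltnW (ltn_ord k))) /=.
rewrite [X in _ = X + _]big_nat_cond [X in _ = X + _]big1 ?add0r; last first.
  by move=> i /andP[/andP[_ ik] _]; rewrite leqNgt ik.
rewrite (big_addn 0 M.+1 k) subSn ?leq_ord //.
by apply: eq_bigr => i _; rewrite leq_addl addnK.
Qed.

Lemma sum_lower_triangle_exchange L f :
  \sum_(m < L.+1) \sum_(p < m.+1) f m p =
  \sum_(p < L.+1) \sum_(j < (L - p).+1) f (p + j)%N p.
Proof.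
under [RHS]eq_bigr do under eq_bigr do rewrite addnC.
rewrite -(sum_triangle_exchange L (fun j p => f (j + p)%N p)).
rewrite (sum_triangle_antidiag L (fun i j => f (i + j)%N j)).
by apply: eq_bigr => r _; apply: eq_bigr => k _; rewrite subnK // -ltnS.
Qed.

End TriangularSums.

Section Pochhammer.
Variable R : comPzRingType.
Implicit Types (x z u : R) (h : nat -> R).

Definition pochhammer z k : R := \prod_(i < k) (z + i%:R).
Definition falling x k : R := \prod_(i < k) (x - i%:R).

Lemma pochhammer0 z : pochhammer z 0 = 1.
Proof. by rewrite /pochhammer big_ord0. Qed.

Lemma pochhammerD z j k :
  pochhammer z (j + k) = pochhammer z j * pochhammer (z + j%:R) k.
Proof.
rewrite /pochhammer big_split_ord /=; congr (_ * _).
by apply: eq_bigr => i _; rewrite natrD addrA.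
Qed.

Lemma pochhammerS z k : pochhammer z k.+1 = z * pochhammer (z + 1) k.
Proof. by rewrite -add1n pochhammerD /pochhammer big_ord1 addr0. Qed.

Lemma pochhammerSr z k : pochhammer z k.+1 = pochhammer z k * (z + k%:R).
Proof. by rewrite -addn1 pochhammerD /pochhammer big_ord1 addr0. Qed.

Lemma pochhammer_nat n k : pochhammer n%:R k = (rising n k)%:R.
Proof. by rewrite /rising natr_prod; apply: eq_bigr => i _; rewrite natrD. Qed.

Lemma pochhammer_oppn_eq0 n k : (n < k)%N -> pochhammer (- n%:R) k = 0.
Proof.
move=> ltnk; rewrite -(subnK ltnk) addnC pochhammerD pochhammerSr addNr.
by rewrite mulr0 mul0r.
Qed.

Lemma falling0 x : falling x 0 = 1.
Proof. by rewrite /falling big_ord0. Qed.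

Lemma fallingSr x k : falling x k.+1 = falling x k * (x - k%:R).
Proof. by rewrite /falling big_ord_recr. Qed.

Lemma sum_binomS r h :
  \sum_(k < r.+2) 'C(r.+1, k)%:R * h k =
  \sum_(k < r.+1) 'C(r, k)%:R * (h k + h k.+1).
Proof.
rewrite big_ord_recl bin0.
under eq_bigr do rewrite lift0 binS natrD mulrDl.
rewrite big_split /= [X in _ + (X + _)]big_ord_recr /= bin_small // mul0r addr0.
under [RHS]eq_bigr do rewrite mulrDr.
by rewrite [RHS]big_split /= [in RHS]big_ord_recl bin0 addrA.
Qed.

(* With u = q this says that b^q a^r and its normal-ordered expansion by [reorder_coef]
   act in the same way on t^z. *)
Lemma pochhammer_reorder u r z :
  \sum_(k < r.+1) 'C(r, k)%:R * ((-1) ^+ k * pochhammer u k)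
                  * pochhammer (z + u + k%:R) (r - k) = pochhammer z r.
Proof.
elim: r z => [|r IH] z; first by rewrite big_ord1 bin0 !pochhammer0; ring.
under eq_bigr do rewrite -mulrA.
rewrite (sum_binomS r (fun k => (-1) ^+ k * pochhammer u k
                                * pochhammer (z + u + k%:R) (r.+1 - k))).
rewrite pochhammerS -(IH (z + 1)) mulr_sumr.
apply: eq_bigr => k _; have lekr : (k <= r)%N by rewrite -ltnS.
rewrite subSn // subSS pochhammerS pochhammerSr exprS mulrSr !addrA.
by rewrite (_ : z + 1 + u + k%:R = z + u + k%:R + 1); [ring | ring].
Qed.

Lemma pochhammer_vandermonde x P u :
  \sum_(k < P.+1) 'C(P, k)%:R * falling x k * pochhammer (u + k%:R) (P - k)
  = pochhammer (u + x) P.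
Proof.
elim: P u => [|P IH] u; first by rewrite big_ord1 bin0 falling0 !pochhammer0; ring.
under eq_bigr do rewrite -mulrA.
rewrite (sum_binomS P (fun k => falling x k * pochhammer (u + k%:R) (P.+1 - k))).
rewrite pochhammerS (_ : u + x + 1 = u + 1 + x); last by ring.
rewrite -(IH (u + 1)) mulr_sumr; apply: eq_bigr => k _.
have lekP : (k <= P)%N by rewrite -ltnS.
rewrite subSn // subSS pochhammerS fallingSr mulrSr !addrA.
by rewrite (_ : u + 1 + k%:R = u + k%:R + 1); [ring | ring].
Qed.

End Pochhammer.

Lemma pochhammer1_neq0 (R : numDomainType) k : pochhammer (1 : R) k != 0.
Proof.
rewrite -[1]/(1%N%:R) pochhammer_nat pnatr_eq0 -lt0n.
by apply: prodn_gt0 => i; rewrite addn_gt0.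
Qed.

Lemma series_ext (X Y : series) : (forall p q, X p q = Y p q) -> X = Y.
Proof. by move=> eqXY; do 2!apply: functional_extensionality => ?. Qed.

(* The coefficient of t^(y+N) in X t^y. *)
Definition repr_coef (X : series) (y : CC) (N : nat) : CC :=
  \sum_(p < N.+1) pochhammer (y + (N - p)%:R) p * X p (N - p)%N.

(* 'C(m+k, k) x(x-1)...(x-k+1) is the coefficient of a^m b^k in (a + x b)^(m+k). *)
Definition tau (x : CC) (X : series) : series := fun m n =>
  \sum_(k < n.+1) 'C(m + k, k)%:R * falling x k * X (m + k)%N (n - k)%N.

Lemma repr_coef_tau x X y N : repr_coef (tau x X) y N = repr_coef X (y + x) N.
Proof.
rewrite /repr_coef /tau.
under eq_bigr do rewrite mulr_sumr.
rewrite (sum_triangle_antidiag N (fun p k => pochhammer (y + (N - p)%:R) p *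
   ('C(p + k, k)%:R * falling x k * X (p + k)%N (N - p - k)%N))).
apply: eq_bigr => r _; have lerN : (r <= N)%N by rewrite -ltnS.
rewrite (_ : y + x + (N - r)%:R = y + (N - r)%:R + x); last by ring.
rewrite -pochhammer_vandermonde mulr_suml; apply: eq_bigr => k _.
have lekr : (k <= r)%N by rewrite -ltnS.
rewrite subnK // (_ : (N - (r - k) - k = N - r)%N); last by lia.
by rewrite (_ : (N - (r - k) = N - r + k)%N) ?natrD ?addrA; [ring | lia].
Qed.

(* The coefficient of a^m b^(q+n) in b^q Y. *)
Definition bmul_coef (Y : series) (q m n : nat) : CC :=
  \sum_(k < n.+1) reorder_coef q (m + k) k * Y (m + k)%N (n - k)%N.

Lemma smul_bmul_coef X Y m n : smul X Y m n =
  \sum_(p < m.+1) \sum_(q < n.+1) X p q * bmul_coef Y q (m - p) (n - q).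
Proof.
rewrite /smul exchange_big; apply: eq_bigr => p _.
rewrite (sum_triangle_exchange n (fun k q => X p q * Y (m - p + k)%N (n - k - q)%N *
   reorder_coef q (m - p + k) k)).
apply: eq_bigr => q _; rewrite /bmul_coef mulr_sumr; apply: eq_bigr => k _.
by rewrite subnAC; ring.
Qed.

Lemma reorder_coefE q r k :
  reorder_coef q r k = 'C(r, k)%:R * ((-1) ^+ k * pochhammer q%:R k).
Proof. by rewrite /reorder_coef natrM pochhammer_nat; ring. Qed.

Lemma repr_coef_bmul Y q y M :
  \sum_(j < M.+1) pochhammer (y + q%:R + (M - j)%:R) j * bmul_coef Y q j (M - j)
  = repr_coef Y y M.
Proof.
rewrite /bmul_coef /repr_coef.
under eq_bigr do rewrite mulr_sumr.
rewrite (sum_triangle_antidiag M (fun j k => pochhammer (y + q%:R + (M - j)%:R) j *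
   (reorder_coef q (j + k) k * Y (j + k)%N (M - j - k)%N))).
apply: eq_bigr => r _; have lerM : (r <= M)%N by rewrite -ltnS.
rewrite -(pochhammer_reorder q%:R r (y + (M - r)%:R)) mulr_suml.
apply: eq_bigr => k _; have lekr : (k <= r)%N by rewrite -ltnS.
rewrite subnK // reorder_coefE (_ : (M - (r - k) - k = M - r)%N); last by lia.
rewrite (_ : (M - (r - k) = M - r + k)%N) ?natrD; last by lia.
by rewrite (_ : y + q%:R + ((M - r)%:R + k%:R) = y + (M - r)%:R + q%:R + k%:R);
  [ring | ring].
Qed.

Lemma repr_coef_smul_expand X Y y L :
  repr_coef (smul X Y) y L =
  \sum_(p < L.+1) \sum_(q < (L - p).+1)
     X p q * pochhammer (y + (L - p)%:R) p * repr_coef Y y (L - p - q).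
Proof.
rewrite {1}/repr_coef.
under eq_bigr do rewrite smul_bmul_coef mulr_sumr.
rewrite (sum_lower_triangle_exchange L (fun m p => pochhammer (y + (L - m)%:R) m *
   \sum_(q < (L - m).+1) X p q * bmul_coef Y q (m - p) (L - m - q))).
apply: eq_bigr => p _; have lepL : (p <= L)%N by rewrite -ltnS.
under eq_bigr do rewrite subnDA addKn mulr_sumr.
rewrite (sum_triangle_exchange (L - p) (fun j q => pochhammer (y + (L - p - j)%:R) (p + j) *
   (X p q * bmul_coef Y q j (L - p - j - q)))).
apply: eq_bigr => q _; have leqLp : (q <= L - p)%N by rewrite -ltnS.
rewrite -(repr_coef_bmul Y q y) mulr_sumr; apply: eq_bigr => j _.
have lej : (j <= L - p - q)%N by rewrite -ltnS.
rewrite addnC pochhammerD -addrA -natrD subnK; last by lia.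
rewrite (_ : (L - p - j = q + (L - p - q - j))%N); last by lia.
by rewrite addKn natrD addrA; ring.
Qed.

Lemma repr_coef_smul X Y y L :
  repr_coef (smul X Y) y L =
  \sum_(N < L.+1) repr_coef Y y N * repr_coef X (y + N%:R) (L - N).
Proof.
rewrite repr_coef_smul_expand.
under [RHS]eq_bigr do rewrite [repr_coef X _ _]/repr_coef mulr_sumr.
rewrite (sum_triangle_exchange L (fun N p => repr_coef Y y N *
   (pochhammer (y + N%:R + (L - N - p)%:R) p * X p (L - N - p)%N))).
apply: eq_bigr => p _; have lepL : (p <= L)%N by rewrite -ltnS.
rewrite (reindex_inj rev_ord_inj) /=; apply: eq_bigr => N _.
have leNLp : (N <= L - p)%N by rewrite -ltnS.
rewrite subSS (_ : (L - p - (L - p - N) = N)%N); last by lia.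
rewrite (_ : (L - N - p = L - p - N)%N); last by lia.
by rewrite -addrA -natrD subnKC //; ring.
Qed.

Lemma repr_coef_inj X Y : (forall y N, repr_coef X y N = repr_coef Y y N) -> X = Y.
Proof.
move=> eqXY; apply: series_ext => p q.
suff eq_diag N j : (j <= N)%N -> X j (N - j)%N = Y j (N - j)%N.
  by have := eq_diag (p + q)%N p (leq_addr q p); rewrite addKn.
(* at y = j + 1 - N the weight of X i (N - i) is pochhammer (j + 1 - i) i, which
   vanishes for i > j and is nonzero for i = j *)
elim/ltn_ind: j => j IH lejN.
move/eqP: (eqXY ((j.+1)%:R - N%:R) N); rewrite -subr_eq0 /repr_coef -sumrB.
rewrite (bigD1 (Ordinal (lejN : (j < N.+1)%N))) //= big1 ?addr0.
  rewrite -mulrBr (_ : (j.+1)%:R - N%:R + (N - j)%:R = 1 :> CC).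
    by rewrite mulf_eq0 (negbTE (pochhammer1_neq0 _ _)) subr_eq0 => /eqP.
  by rewrite natrB //; ring.
move=> i /eqP neij; have leiN : (i <= N)%N by rewrite -ltnS.
case: (ltngtP i j) => [ltij | ltji | eqij].
- by rewrite (IH i ltij (leq_trans (ltnW ltij) lejN)) subrr.
- rewrite -mulrBr (_ : (j.+1)%:R - N%:R + (N - i)%:R = - (i - j.+1)%:R :> CC).
    by rewrite pochhammer_oppn_eq0 ?mul0r //; lia.
  by rewrite !natrB //; ring.
- by exfalso; apply: neij; apply: val_inj.
Qed.

Lemma tau_smul x X Y : tau x (smul X Y) = smul (tau x X) (tau x Y).
Proof.
apply: repr_coef_inj => y L.
rewrite repr_coef_tau !repr_coef_smul; apply: eq_bigr => N _.
by rewrite !repr_coef_tau addrAC.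
Qed.

Lemma tau_comp x z X : tau z (tau x X) = tau (x + z) X.
Proof. by apply: repr_coef_inj => y L; rewrite !repr_coef_tau addrA addrAC. Qed.

Lemma tau0 X : tau 0 X = X.
Proof. by apply: repr_coef_inj => y L; rewrite repr_coef_tau addr0. Qed.

Lemma tauK x : cancel (tau x) (tau (- x)).
Proof. by move=> X; rewrite tau_comp subrr tau0. Qed.

Lemma tauNK x : cancel (tau (- x)) (tau x).
Proof. by move=> X; rewrite tau_comp addNr tau0. Qed.

Lemma tau_sadd x X Y : tau x (sadd X Y) = sadd (tau x X) (tau x Y).
Proof.
apply: series_ext => m n.
by rewrite /tau /sadd -big_split; apply: eq_bigr => k _ /=; rewrite mulrDr.
Qed.

Lemma tau_sscale x c X : tau x (sscale c X) = sscale c (tau x X).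
Proof.
apply: series_ext => m n.
by rewrite /tau /sscale mulr_sumr; apply: eq_bigr => k _; rewrite mulrCA.
Qed.

Lemma tau_id_bseries x S : (forall p q, (0 < p)%N -> S p q = 0) -> tau x S = S.
Proof.
move=> S_b; apply: series_ext => m n.
rewrite /tau big_ord_recl addn0 bin0 falling0 subn0 mul1r mul1r big1 ?addr0 //.
by move=> i _; rewrite S_b ?mulr0 // addn_gt0 lift0 orbT.
Qed.

Lemma tau_sa x : tau x sa = sadd sa (sscale x sb).
Proof.
apply: series_ext => m [|[|n]]; rewrite /tau /sadd /sscale.
- by rewrite big_ord1 addn0 bin0 falling0 /sb andbF mulr0 addr0 !mul1r.
- rewrite big_ord_recl big_ord1 /= addn0 addn1 subn0 bin0 bin1 fallingSr falling0.
  by case: m => [|m]; rewrite /sa /sb /= ?andbF; ring.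
- rewrite big1 => [|k _]; first by rewrite /sa /sb !andbF mulr0 addr0.
  rewrite /sa; case: ifP => [/andP[/eqP m_k /eqP n_k] | _]; last by rewrite mulr0.
  by have := ltn_ord k; lia.
Qed.

Lemma norm_falling_le (R : numDomainType) (x : R) k :
  `|falling x k| <= (1 + `|x|) ^+ k * k`!%:R.
Proof.
have -> : (1 + `|x|) ^+ k * k`!%:R = \prod_(i < k) ((1 + `|x|) * i.+1%:R).
  by rewrite big_split /= prodr_const card_ord fact_prod natr_prod big_add1 big_mkord.
rewrite /falling normr_prod; apply: ler_prod => i _; rewrite normr_ge0 /=.
apply: le_trans (ler_normB _ _) _; rewrite normr_nat.
rewrite (_ : _ * _ = `|x| + i%:R + (`|x| * i%:R + 1)); last by rewrite mulrSr; ring.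
by rewrite lerDl addr_ge0 ?mulr_ge0 ?ler0n.
Qed.

Lemma leq_bin_exp2 n k : ('C(n, k) <= 2 ^ n)%N.
Proof.
elim: n k => [|n IH] [|k] //; first by rewrite bin0 expn_gt0.
by rewrite binS expnS mul2n -addnn leq_add.
Qed.

Lemma bin_fact_le m n k :
  (k <= n)%N -> ('C(m + k, k) * (k`! * (n - k)`!) <= 2 ^ (m + n) * n`!)%N.
Proof.
move=> lekn; apply: leq_mul.
  by rewrite (leq_trans (leq_bin_exp2 _ _)) // leq_exp2l // leq_add2l.
by rewrite -(bin_fact lekn) leq_pmull // bin_gt0.
Qed.

Lemma succn_exp2_le n m : (n.+1 * 2 ^ (m + n) <= 4 ^ (m + n))%N.
Proof.
rewrite (_ : 4 = 2 * 2)%N // expnMn leq_mul2r; apply/orP; right.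
by apply: leq_trans (ltn_expl n (ltnSn 1)) _; rewrite leq_exp2l // leq_addl.
Qed.

Section TauBound.
Variables (x : CC) (X : series) (K rho : CC).
Hypotheses (K_ge0 : 0 <= K) (rho_ge0 : 0 <= rho).
Hypothesis X_le : forall p q, `|X p q| <= K * rho ^+ (p + q) * q`!%:R.

Let M := 1 + `|x|.
Let M_ge1 : 1 <= M. Proof. by rewrite lerDl. Qed.
Let M_ge0 : 0 <= M. Proof. exact: le_trans ler01 M_ge1. Qed.

Lemma norm_tau_term_le m n (k : 'I_n.+1) :
  `|'C(m + k, k)%:R * falling x k * X (m + k)%N (n - k)%N|
  <= (2 ^ (m + n) * n`!)%:R * M ^+ n * (K * rho ^+ (m + n)).
Proof.
have lekn : (k <= n)%N by rewrite -ltnS.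
have c_ge0 : 0 <= K * rho ^+ (m + n) by rewrite mulr_ge0 ?exprn_ge0.
rewrite !normrM normr_nat.
apply: le_trans (_ : _ <= 'C(m + k, k)%:R * (M ^+ k * k`!%:R)
                         * (K * rho ^+ (m + n) * (n - k)`!%:R)) _.
  apply: ler_pM; rewrite ?mulr_ge0 ?ler0n ?normr_ge0 //.
    by rewrite ler_wpM2l ?ler0n ?norm_falling_le.
  by have := X_le (m + k) (n - k); rewrite -addnA subnKC.
rewrite (_ : _ * _ = ('C(m + k, k) * (k`! * (n - k)`!))%:R * M ^+ k
                     * (K * rho ^+ (m + n))); last by rewrite !natrM; ring.
rewrite ler_wpM2r // ler_pM ?ler0n ?exprn_ge0 ?ler_nat ?bin_fact_le //.
exact: ler_weXn2l.
Qed.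

Lemma norm_tau_le m n :
  `|tau x X m n| <= K * (4 * (1 + `|x|) * rho) ^+ (m + n) * n`!%:R.
Proof.
rewrite /tau; apply: le_trans (ler_norm_sum _ _ _) _.
apply: le_trans (ler_sum _ (fun k _ => norm_tau_term_le m k)) _.
rewrite sumr_const card_ord -[_ *+ n.+1]mulr_natl -/M.
rewrite [X in X <= _](_ : _ = (n.+1 * 2 ^ (m + n))%:R * M ^+ n
                     * (K * rho ^+ (m + n) * n`!%:R)); last by rewrite !natrM; ring.
rewrite [X in _ <= X](_ : _ = (4 ^ (m + n))%:R * M ^+ (m + n)
                     * (K * rho ^+ (m + n) * n`!%:R)); last first.
  by rewrite !exprMn natrX; ring.
rewrite ler_wpM2r ?mulr_ge0 ?ler0n ?exprn_ge0 //.
by rewrite ler_pM ?ler0n ?exprn_ge0 ?ler_nat ?succn_exp2_le ?ler_weXn2l ?leq_addl.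
Qed.

End TauBound.

Lemma conv_tau x X : conv X -> conv (tau x X).
Proof.
case=> R [C [R_gt1 [C_gt0 X_le]]].
have [s [normx s_ge0]] : exists s : RR, `|x| = s%:C /\ 0 <= s.
  by rewrite normc_def; eexists; split; [reflexivity | exact: sqrtr_ge0].
exists (4 * (1 + s) * R), C; split; first nra.
split => // m n.
have -> : (C * (4 * (1 + s) * R) ^+ (m + n) * n`!%:R)%:C
          = C%:C * (4 * (1 + `|x|) * R%:C) ^+ (m + n) * n`!%:R.
  by rewrite normx !rmorphM !rmorphXn !rmorphM !rmorph_nat rmorphD rmorph1.
apply: norm_tau_le => [||p q]; rewrite ?ler0c; [lra | lra |].
by have := X_le p q; rewrite !rmorphM rmorphXn rmorph_nat.
Qed.

Theorem proposition1p2p1 :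
  forall x : CC, exists tau : series -> series,
    (* tau maps \tilde A_conv into itself, bijectively *)
    (forall X, conv X -> conv (tau X)) /\
    (forall X Y, conv X -> conv Y -> tau X = tau Y -> X = Y) /\
    (forall Y, conv Y -> exists X, conv X /\ tau X = Y) /\
    (* C-linear *)
    (forall X Y, conv X -> conv Y -> tau (sadd X Y) = sadd (tau X) (tau Y)) /\
    (forall (c : CC) X, conv X -> tau (sscale c X) = sscale c (tau X)) /\
    (* multiplicative and unital *)
    (forall X Y, conv X -> conv Y -> tau (smul X Y) = smul (tau X) (tau Y)) /\
    tau sone = sone /\
    (* commutes with the left and right B-actions *)
    (forall S T X, inB S -> inB T -> conv X ->
        tau (smul (smul S X) T) = smul (smul S (tau X)) T) /\
    (* values on generators *)
    tau sa = sadd sa (sscale x sb) /\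
    tau sb = sb.
Proof.
move=> x; exists (tau x).
split; first exact: conv_tau.
split; first by move=> X Y _ _; exact: (can_inj (tauK x)).
split.
  by move=> Y convY; exists (tau (- x) Y); rewrite tauNK; split; first exact: conv_tau.
split; first by move=> X Y _ _; apply: tau_sadd.
split; first by move=> c X _; apply: tau_sscale.
split; first by move=> X Y _ _; apply: tau_smul.
split; first by apply: tau_id_bseries => -[].
split.
  move=> S T X [S_b _] [T_b _] _.
  by rewrite !tau_smul (tau_id_bseries x S_b) (tau_id_bseries x T_b).
split; first exact: tau_sa.
by apply: tau_id_bseries => -[].
Qed.
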